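(* Let $\vdash\subseteq Sqt$ satisfy (A), (Mon), (Cut), (Com), ($\bot$), ($\wedge$I), ($\wedge$E), ($\to$0), ($\to$1), ($\to$2). Then for every $\varphi\in Form$ and every $\Gamma\in W^c_\vdash$: $\mathfrak M^c_\vdash,\Gamma\models\varphi$ iff $\varphi\in\Gamma$.
   Context: $Form$: $\varphi::=p\mid\bot\mid(\varphi\wedge\varphi)\mid(\varphi\to\varphi)$ over a countable set $P0$ ($\wedge$ left-associative, binds tighter than $\to$). Model $(W,R,V)$ with $W\ne\emptyset$, $R\subseteq W\times W$, $V:P0\to\wp(W)$; satisfaction: $\bot$ never true, $p$ true at $s$ iff $s\in V(p)$, $\wedge$ pointwise, $\varphi\to\psi$ true at $s$ iff every $R$-successor $t$ of $s$ satisfying $\varphi$ satisfies $\psi$. Sequents: $(\Gamma,\varphi)$ with $\Gamma\subseteq Form$; $\Gamma\vdash\varphi$ means $(\Gamma,\varphi)\in\vdash$; $\psi\vdash\varphi$ means $\{\psi\}\vdash\varphi$; $\vdash\varphi$ means $\emptyset\vdash\varphi$. Rules: (A) $\Gamma\cup\{\varphi\}\vdash\varphi$; (Mon) $\Gamma\subseteq\Delta$, $\Gamma\vdash\varphi\Rightarrow\Delta\vdash\varphi$; (Cut) $\Gamma\cup\{\psi\}\vdash\varphi$, $\Delta\vdash\psi\Rightarrow\Gamma\cup\Delta\vdash\varphi$; (Com) $\Gamma\vdash\varphi\Rightarrow\Gamma'\vdash\varphi$ for a finite $\Gamma'\subseteq\Gamma$; ($\bot$) $\bot\vdash\varphi$;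 ($\wedge$I) $\{\varphi,\psi\}\vdash\varphi\wedge\psi$; ($\wedge$E) $\varphi\wedge\psi\vdash\varphi$, $\varphi\wedge\psi\vdash\psi$; ($\to$0) $\vdash\varphi\to\varphi$; ($\to$1) $\Gamma\vdash\varphi\Rightarrow\{\psi\to\chi:\chi\in\Gamma\}\vdash\psi\to\varphi$; ($\to$2) $\{\varphi\to\psi,\psi\to\chi\}\vdash\varphi\to\chi$. $\Gamma$ is $\vdash$-consistent iff $\Gamma\nvdash\varphi$ for some $\varphi$; $\vdash$-deduction closed iff $\Gamma\vdash\psi\Rightarrow\psi\in\Gamma$. For $n\ge2$, $\vdash$ satisfies $(\alpha,\{\beta_1,\dots,\beta_n\})$ iff (i) for all $\Gamma,\varphi$: if $\Gamma\cup\{\beta_i\}\vdash\varphi$ for all $i$ then $\Gamma\cup\{\alpha\}\vdash\varphi$, and (ii) for all $\varphi,\psi_1,\dots,\psi_n$: $\{\psi_i\wedge\beta_i\to\varphi:1\le i\le n\}\vdash\psi_1\wedge\dots\wedge\psi_n\wedge\alpha\to\varphi$. $\Gamma$ is $\vdash$-prime iff whenever $\vdash$ satisfies $(\alpha,\{\beta_1,\dots,\beta_n\})$ ($n\ge2$) and $\alpha\in\Gamma$, some $\beta_i\in\Gamma$. $\Gamma R_\to\Delta$ iff $\varphi\to\psi\in\Gamma$ and $\varphi\in\Delta$ imply $\psi\in\Delta$. The canonical model $\mathfrak M^c_\vdash=(W^c_\vdash,R^c_\vdash,V^c_\vdash)$: $W^c_\vdash$ is the set of $\vdash$-consistent, $\vdash$-deduction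 closed, $\vdash$-prime subsets of $Form$; $R^c_\vdash=R_\to\cap(W^c_\vdash\times W^c_\vdash)$; $V^c_\vdash(p)=\{\Gamma\in W^c_\vdash:p\in\Gamma\}$. *)

From Stdlib Require Import List.
Import ListNotations.

(* Formulas over the countable set P0 of atoms, taken to be nat. *)
Inductive Form : Type :=
| Atom : nat -> Form
| Bot : Form
| And : Form -> Form -> Form
| Imp : Form -> Form -> Form.

(* Sets of formulas as predicates; a consequence relation is a set of sequents. *)
Definition FSet := Form -> Prop.
Definition Cons := FSet -> Form -> Prop.

Definition union (G D : FSet) : FSet := fun x => G x \/ D x.
Definition sing (a : Form) : FSet := fun x => x = a.
Definition pair (a b : Form) : FSet := fun x => x = a \/ x = b.
Definition emptyset : FSet := fun _ => False.
Definition subset (G D : FSet) : Prop := forall x, G x -> D x.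

Definition rule_A (d : Cons) := forall G phi, d (union G (sing phi)) phi.
Definition rule_Mon (d : Cons) := forall G D phi, subset G D -> d G phi -> d D phi.
Definition rule_Cut (d : Cons) := forall G D psi phi,
  d (union G (sing psi)) phi -> d D psi -> d (union G D) phi.
Definition rule_Com (d : Cons) := forall G phi, d G phi ->
  exists l : list Form, (forall x, In x l -> G x) /\ d (fun x => In x l) phi.
Definition rule_Bot (d : Cons) := forall phi, d (sing Bot) phi.
Definition rule_AndI (d : Cons) := forall phi psi, d (pair phi psi) (And phi psi).
Definition rule_AndE (d : Cons) := forall phi psi,
  d (sing (And phi psi)) phi /\ d (sing (And phi psi)) psi.
Definition rule_Imp0 (d : Cons) := forall phi, d emptyset (Imp phi phi).
Definition rule_Imp1 (d : Cons) := forall G phi psi, d G phi ->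
  d (fun x => exists chi, G chi /\ x = Imp psi chi) (Imp psi phi).
Definition rule_Imp2 (d : Cons) := forall phi psi chi,
  d (pair (Imp phi psi) (Imp psi chi)) (Imp phi chi).

Definition all_rules (d : Cons) : Prop :=
  rule_A d /\ rule_Mon d /\ rule_Cut d /\ rule_Com d /\ rule_Bot d /\
  rule_AndI d /\ rule_AndE d /\ rule_Imp0 d /\ rule_Imp1 d /\ rule_Imp2 d.

Definition bigAnd (ps : list Form) : Form :=
  match ps with
  | [] => Bot (* never used: lists have length >= 2 *)
  | p :: ps' => fold_left And ps' p
  end.

(* d satisfies (alpha, {beta_1,...,beta_n}), n >= 2; the beta's are given as a list. *)
Definition satisfies (d : Cons) (alpha : Form) (bs : list Form) : Prop :=
  2 <= length bs /\
  (forall G phi, (forall b, In b bs -> d (union G (sing b)) phi) ->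
                 d (union G (sing alpha)) phi) /\
  (forall phi (ps : list Form), length ps = length bs ->
     d (fun x => exists i, i < length bs /\
                 x = Imp (And (nth i ps Bot) (nth i bs Bot)) phi)
       (Imp (And (bigAnd ps) alpha) phi)).

Definition consistent (d : Cons) (G : FSet) : Prop := exists phi, ~ d G phi.
Definition ded_closed (d : Cons) (G : FSet) : Prop := forall psi, d G psi -> G psi.
Definition prime (d : Cons) (G : FSet) : Prop :=
  forall alpha bs, satisfies d alpha bs -> G alpha -> exists b, In b bs /\ G b.

Definition R_imp (G D : FSet) : Prop :=
  forall phi psi, G (Imp phi psi) -> D phi -> D psi.

Fixpoint sat {W : Type} (R : W -> W -> Prop) (V : nat -> W -> Prop)
  (s : W) (phi : Form) : Prop :=
  match phi with
  | Atom p => V p s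
  | Bot => False
  | And a b => sat R V s a /\ sat R V s b
  | Imp a b => forall t, R s t -> sat R V t a -> sat R V t b
  end.

Definition inWc (d : Cons) (G : FSet) : Prop :=
  consistent d G /\ ded_closed d G /\ prime d G.
Definition Wc (d : Cons) : Type := { G : FSet | inWc d G }.
Definition Rc (d : Cons) (G D : Wc d) : Prop := R_imp (proj1_sig G) (proj1_sig D).
Definition Vc (d : Cons) (p : nat) (G : Wc d) : Prop := proj1_sig G (Atom p).

From Stdlib Require Import List Classical Cantor Lia.
Import ListNotations.

(* The truth lemma is proved by induction on the formula; only the left-to-right
   implication case needs work.  If [Imp a b] is not in the world [G], extend
   [{a}] along an enumeration of formulas to a maximal set [D] that is
   separated from [b] over [G]: no consequence [chi] of [D] has [Imp chi b] in
   [G].  As [G] contains [Imp b b], [D] omits [b]; maximality makes [D]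
   deductively closed, and every [beta] outside [D] comes with some [delta] in
   [D] such that [Imp (And delta beta) b] is in [G].  Applied to [psi] with
   [Imp phi psi] in [G] and [phi] in [D] this gives [R_imp G D]; applied to all
   the [beta_i] of a pair [(alpha, bs)] and combined by condition (ii) of
   [satisfies] it gives primeness of [D]. *)

Fixpoint form_code (f : Form) : nat :=
  match f with
  | Atom n => to_nat (0, n)
  | Bot => to_nat (1, 0)
  | And f g => to_nat (2, to_nat (form_code f, form_code g))
  | Imp f g => to_nat (3, to_nat (form_code f, form_code g))
  end.

Lemma to_nat_inj (p q : nat * nat) : to_nat p = to_nat q -> p = q.
Proof. intros E. now rewrite <- (cancel_of_to p), <- (cancel_of_to q), E. Qed.

Lemma form_code_inj f g : form_code f = form_code g -> f = g.
Proof.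
  revert g; induction f as [n| |f1 IH1 f2 IH2|f1 IH1 f2 IH2];
    intros [m| |g1 g2|g1 g2] E; try reflexivity; cbn [form_code] in E;
    apply to_nat_inj, pair_equal_spec in E as [Etag E]; try discriminate;
    try (subst; reflexivity);
    apply to_nat_inj, pair_equal_spec in E as [E1 E2]; f_equal; auto.
Qed.

Lemma list_choice_nth {A B : Type} (P : A -> B -> Prop) (a0 : A) (b0 : B) (bs : list B) :
  (forall b, In b bs -> exists a, P a b) ->
  exists l, length l = length bs /\
            forall i, i < length bs -> P (nth i l a0) (nth i bs b0).
Proof.
  induction bs as [|b bs IH]; intros Hex.
  - exists []. split; [reflexivity|]. intros i Hi. inversion Hi.
  - destruct IH as [l [Hlen Hl]]; [intros; apply Hex; right; assumption|].
    destruct (Hex b (or_introl eq_refl)) as [a Ha].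
    exists (a :: l). split; [cbn; congruence|].
    intros [|i] Hi; [exact Ha|]. apply Hl. cbn in Hi. lia.
Qed.

Section Consequence.

Context {d : Cons} (Hd : all_rules d).

Let HA : rule_A d := proj1 Hd.
Let HMon : rule_Mon d := proj1 (proj2 Hd).
Let HCut : rule_Cut d := proj1 (proj2 (proj2 Hd)).
Let HCom : rule_Com d := proj1 (proj2 (proj2 (proj2 Hd))).
Let HBot : rule_Bot d := proj1 (proj2 (proj2 (proj2 (proj2 Hd)))).
Let HAndI : rule_AndI d := proj1 (proj2 (proj2 (proj2 (proj2 (proj2 Hd))))).
Let HAndE : rule_AndE d := proj1 (proj2 (proj2 (proj2 (proj2 (proj2 (proj2 Hd)))))).
Let HImp0 : rule_Imp0 d := proj1 (proj2 (proj2 (proj2 (proj2 (proj2 (proj2 (proj2 Hd))))))).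
Let HImp1 : rule_Imp1 d := proj1 (proj2 (proj2 (proj2 (proj2 (proj2 (proj2 (proj2 (proj2 Hd)))))))).
Let HImp2 : rule_Imp2 d := proj2 (proj2 (proj2 (proj2 (proj2 (proj2 (proj2 (proj2 (proj2 Hd)))))))).

Lemma derives_mem (S : FSet) phi : S phi -> d S phi.
Proof.
  intros Hphi. apply (HMon (union S (sing phi))); [|apply HA].
  intros x [Hx|Hx]; [exact Hx|]. unfold sing in Hx. subst. exact Hphi.
Qed.

Lemma derives_cut_list (S : FSet) (L : list Form) chi :
  d (union S (fun x => In x L)) chi -> (forall x, In x L -> d S x) -> d S chi.
Proof.
  revert chi; induction L as [|y L IH]; intros chi Hchi HL.
  - eapply HMon; [|exact Hchi]. intros x [Hx|[]]. exact Hx.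
  - apply IH; [|intros x Hx; apply HL; right; exact Hx].
    assert (Hcut : d (union (union S (fun x => In x L)) S) chi).
    { apply (HCut _ _ y); [|apply HL; left; reflexivity].
      eapply HMon; [|exact Hchi]. intros x [Hx|[Hx|Hx]].
      - left; left; exact Hx.
      - right; symmetry; exact Hx.
      - left; right; exact Hx. }
    eapply HMon; [|exact Hcut]. intros x [Hx|Hx]; [exact Hx|left; exact Hx].
Qed.

Lemma derives_trans (A S : FSet) chi : d A chi -> (forall x, A x -> d S x) -> d S chi.
Proof.
  intros Hchi HS. destruct (HCom _ _ Hchi) as [L [HLA HL]].
  apply (derives_cut_list S L); [|intros x Hx; apply HS, HLA, Hx].
  eapply HMon; [|exact HL]. intros x Hx. right. exact Hx.
Qed.

Lemma derives_imp_intro phi psi : d (sing phi) psi -> d emptyset (Imp phi psi).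
Proof.
  intros Hpsi. apply (derives_trans _ _ _ (HImp1 _ _ phi Hpsi)).
  intros x [chi [Echi Ex]]. unfold sing in Echi. subst. apply HImp0.
Qed.

Section ClosedSets.

Variable D : FSet.
Hypothesis HD : ded_closed d D.

Lemma closed_derives (S : FSet) phi : (forall x, S x -> D x) -> d S phi -> D phi.
Proof. intros HS Hphi. apply HD. eapply HMon; [exact HS|exact Hphi]. Qed.

Lemma closed_theorem phi : d emptyset phi -> D phi.
Proof. apply closed_derives. intros x []. Qed.

Lemma closed_imp_of_derives phi psi : d (sing phi) psi -> D (Imp phi psi).
Proof. intros Hpsi. apply closed_theorem, derives_imp_intro, Hpsi. Qed.

Lemma closed_imp_trans phi psi chi :
  D (Imp phi psi) -> D (Imp psi chi) -> D (Imp phi chi).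
Proof.
  intros H1 H2. eapply closed_derives; [|apply (HImp2 phi psi chi)].
  intros x [Ex|Ex]; subst; assumption.
Qed.

Lemma closed_and phi psi : D phi -> D psi -> D (And phi psi).
Proof.
  intros H1 H2. eapply closed_derives; [|apply (HAndI phi psi)].
  intros x [Ex|Ex]; subst; assumption.
Qed.

Lemma closed_and_inv phi psi : D (And phi psi) -> D phi /\ D psi.
Proof.
  intros H. destruct (HAndE phi psi) as [H1 H2].
  split; (eapply closed_derives; [|eassumption]);
    intros x Hx; unfold sing in Hx; subst; exact H.
Qed.

Lemma closed_bigAnd ps : ps <> [] -> (forall x, In x ps -> D x) -> D (bigAnd ps).
Proof.
  destruct ps as [|p ps]; [contradiction|]. intros _ Hps. cbn.
  assert (Hp : D p) by (apply Hps; left; reflexivity).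
  assert (Hrest : forall x, In x ps -> D x) by (intros x Hx; apply Hps; right; exact Hx).
  clear Hps. revert p Hp. induction ps as [|q ps IH]; intros p Hp; [exact Hp|].
  apply IH; [intros x Hx; apply Hrest; right; exact Hx|].
  apply closed_and; [exact Hp|apply Hrest; left; reflexivity].
Qed.

Lemma closed_consistent_not_bot : consistent d D -> ~ D Bot.
Proof.
  intros [phi Hphi] HBotD. apply Hphi, derives_mem, HD.
  eapply HMon; [|apply HBot]. intros x Hx. unfold sing in Hx. subst. exact HBotD.
Qed.

Lemma closed_imp_and_mono delta phi psi :
  D (Imp phi psi) -> D (Imp (And delta phi) (And delta psi)).
Proof.
  intros Himp. destruct (HAndE delta phi) as [Hdelta Hphi].
  eapply closed_derives; [|apply (HImp1 _ _ (And delta phi) (HAndI delta psi))].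
  intros x [chi [[E|E] Ex]]; subst.
  - apply closed_imp_of_derives, Hdelta.
  - eapply closed_imp_trans; [apply closed_imp_of_derives, Hphi|exact Himp].
Qed.

Lemma closed_finite_conj a0 psi (L : list Form) :
  D a0 -> (forall x, In x L -> union D (sing psi) x) ->
  exists delta, D delta /\ forall x, In x L -> d (pair delta psi) x.
Proof.
  intros Ha0. induction L as [|y L IH]; intros HL.
  - exists a0. split; [exact Ha0|]. intros x [].
  - destruct IH as [delta [Hdelta Hx]]; [intros x Hx; apply HL; right; exact Hx|].
    destruct (HL y (or_introl eq_refl)) as [Hy|Hy].
    + exists (And delta y). split; [apply closed_and; assumption|].
      destruct (HAndE delta y) as [Eleft Eright].
      assert (Hpair : forall z, pair delta psi z -> d (pair (And delta y) psi) z).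
      { intros z [Ez|Ez]; subst.
        - eapply HMon; [|exact Eleft]. intros w Ew. left. exact Ew.
        - apply derives_mem. right. reflexivity. }
      intros x [Ex|Ex].
      * subst. eapply HMon; [|exact Eright]. intros w Ew. left. exact Ew.
      * exact (derives_trans _ _ _ (Hx x Ex) Hpair).
    + exists delta. split; [exact Hdelta|].
      intros x [Ex|Ex]; [|exact (Hx x Ex)].
      unfold sing in Hy. subst. apply derives_mem. right. reflexivity.
Qed.

Lemma closed_extend_derives a0 psi chi :
  D a0 -> d (union D (sing psi)) chi ->
  exists delta, D delta /\ d (sing (And delta psi)) chi.
Proof.
  intros Ha0 Hchi. destruct (HCom _ _ Hchi) as [L [HL HLchi]].
  destruct (closed_finite_conj a0 psi L Ha0 HL) as [delta [Hdelta Hpair]].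
  exists delta. split; [exact Hdelta|].
  apply (derives_trans _ _ _ (derives_trans _ _ _ HLchi Hpair)).
  destruct (HAndE delta psi) as [H1 H2]. intros x [Ex|Ex]; subst; assumption.
Qed.

End ClosedSets.

Section Lindenbaum.

Variable G : FSet.
Hypothesis HG : ded_closed d G.
Variables a b : Form.
Hypothesis Hab : ~ G (Imp a b).

Definition separated (S : FSet) : Prop := forall chi, d S chi -> ~ G (Imp chi b).

Lemma separated_subset (S T : FSet) : subset S T -> separated T -> separated S.
Proof. intros HST HT chi Hchi. apply HT. eapply HMon; eassumption. Qed.

Fixpoint stage (n : nat) : FSet :=
  match n with
  | 0 => sing a
  | S n => fun x => stage n x \/
                    (form_code x = n /\ separated (union (stage n) (sing x)))
  end.

Definition extension : FSet := fun x => exists n, stage n x.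

Lemma stage_mono n m : n <= m -> subset (stage n) (stage m).
Proof. induction 1; intros x Hx; cbn; auto. Qed.

Lemma stage_separated n : separated (stage n).
Proof.
  induction n as [|n IH]; cbn.
  - intros chi Hchi Hchib. apply Hab.
    exact (closed_imp_trans _ HG _ _ _ (closed_imp_of_derives _ HG _ _ Hchi) Hchib).
  - destruct (classic (exists y, form_code y = n /\ separated (union (stage n) (sing y))))
      as [[y [Ey Hy]]|Hnone].
    + eapply separated_subset; [|exact Hy].
      intros x [Hx|[Ex _]]; [left; exact Hx|].
      right. apply form_code_inj. congruence.
    + eapply separated_subset; [|exact IH].
      intros x [Hx|Hx]; [exact Hx|]. exfalso. apply Hnone. exists x. exact Hx.
Qed.

Lemma extension_finite_stage (L : list Form) :
  (forall x, In x L -> extension x) -> exists n, forall x, In x L -> stage n x.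
Proof.
  induction L as [|y L IH]; intros HL.
  - exists 0. intros x [].
  - destruct IH as [n Hn]; [intros x Hx; apply HL; right; exact Hx|].
    destruct (HL y (or_introl eq_refl)) as [m Hm].
    exists (n + m). intros x [Ex|Ex].
    + subst. eapply stage_mono; [|exact Hm]. lia.
    + eapply stage_mono; [|exact (Hn x Ex)]. lia.
Qed.

Lemma extension_separated : separated extension.
Proof.
  intros chi Hchi. destruct (HCom _ _ Hchi) as [L [HL HLchi]].
  destruct (extension_finite_stage L HL) as [n Hn].
  apply (stage_separated n). eapply HMon; [exact Hn|exact HLchi].
Qed.

Lemma extension_maximal x : separated (union extension (sing x)) -> extension x.
Proof.
  intros Hx. exists (S (form_code x)). right. split; [reflexivity|].
  eapply separated_subset; [|exact Hx].
  intros y [Hy|Hy]; [left; exists (form_code x); exact Hy|right; exact Hy].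
Qed.

Lemma extension_contains_a : extension a.
Proof. exists 0. reflexivity. Qed.

Lemma extension_not_imp c : extension c -> ~ G (Imp c b).
Proof. intros Hc. apply extension_separated, derives_mem, Hc. Qed.

Lemma extension_closed : ded_closed d extension.
Proof.
  intros psi Hpsi. apply extension_maximal. intros chi Hchi.
  apply extension_separated.
  eapply HMon; [|exact (HCut _ _ _ _ Hchi Hpsi)]. intros x [Hx|Hx]; exact Hx.
Qed.

Lemma extension_omits_b : ~ extension b.
Proof.
  intros Hb. apply (extension_not_imp b Hb), (closed_theorem _ HG), HImp0.
Qed.

Lemma extension_excluded beta :
  ~ extension beta -> exists delta, extension delta /\ G (Imp (And delta beta) b).
Proof.
  intros Hbeta.
  assert (Hsep : ~ separated (union extension (sing beta)))
    by (intros Hsep; apply Hbeta, extension_maximal, Hsep).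
  apply not_all_ex_not in Hsep as [chi Hchi].
  apply imply_to_and in Hchi as [Hchi Hchib]. apply NNPP in Hchib.
  destruct (closed_extend_derives _ extension_closed a beta chi extension_contains_a Hchi)
    as [delta [Hdelta Hconj]].
  exists delta. split; [exact Hdelta|].
  exact (closed_imp_trans _ HG _ _ _ (closed_imp_of_derives _ HG _ _ Hconj) Hchib).
Qed.

Lemma extension_accessible : R_imp G extension.
Proof.
  intros phi psi Himp Hphi. apply NNPP. intros Hpsi.
  destruct (extension_excluded psi Hpsi) as [delta [Hdelta Hdb]].
  apply (extension_not_imp (And delta phi)).
  - exact (closed_and _ extension_closed _ _ Hdelta Hphi).
  - exact (closed_imp_trans _ HG _ _ _ (closed_imp_and_mono _ HG delta _ _ Himp) Hdb).
Qed.

Lemma extension_prime : prime d extension.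
Proof.
  intros alpha bs [Hlen [_ Hjoin]] Halpha. apply NNPP. intros Hnone.
  assert (Hexcl : forall beta, In beta bs ->
                  exists delta, extension delta /\ G (Imp (And delta beta) b)).
  { intros beta Hbeta. apply extension_excluded. intros Hin. apply Hnone. eauto. }
  destruct (list_choice_nth _ Bot Bot bs Hexcl) as [ps [Hps Hchoice]].
  apply (extension_not_imp (And (bigAnd ps) alpha)).
  - apply (closed_and _ extension_closed); [|exact Halpha].
    apply (closed_bigAnd _ extension_closed).
    + intros E. subst. cbn in Hps. lia.
    + intros x Hx. destruct (In_nth _ _ Bot Hx) as [i [Hi Ex]]. subst.
      apply Hchoice. lia.
  - eapply (closed_derives _ HG); [|exact (Hjoin b ps Hps)].
    intros x [i [Hi Ex]]. subst. apply Hchoice, Hi.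
Qed.

Lemma extension_world : inWc d extension.
Proof.
  split; [|split; [exact extension_closed|exact extension_prime]].
  exists b. intros Hb. apply extension_omits_b, extension_closed, Hb.
Qed.

End Lindenbaum.

Lemma imp_countermodel (G : FSet) a b :
  ded_closed d G -> ~ G (Imp a b) ->
  exists D, inWc d D /\ R_imp G D /\ D a /\ ~ D b.
Proof.
  intros HG Hab. exists (extension G a b). split; [|split; [|split]].
  - exact (extension_world G HG a b Hab).
  - exact (extension_accessible G HG a b Hab).
  - exact (extension_contains_a G a b).
  - exact (extension_omits_b G HG a b Hab).
Qed.

End Consequence.

Theorem mainTheorem12 (d : Cons) (Hd : all_rules d) :
  forall (phi : Form) (G : FSet) (HG : inWc d G),
    sat (Rc d) (Vc d) (exist _ G HG) phi <-> G phi.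
Proof.
  induction phi as [p| |phi IH1 psi IH2|phi IH1 psi IH2];
    intros G HG; pose proof HG as [Hcons [Hclosed _]]; cbn.
  - reflexivity.
  - split; [intros []|]. exact (closed_consistent_not_bot Hd G Hclosed Hcons).
  - rewrite IH1, IH2. split.
    + intros [Hphi Hpsi]. exact (closed_and Hd G Hclosed _ _ Hphi Hpsi).
    + exact (closed_and_inv Hd G Hclosed phi psi).
  - split.
    + intros Hsat. apply NNPP. intros Himp.
      destruct (imp_countermodel Hd G phi psi Hclosed Himp) as (D & HD & HR & Hphi & Hpsi).
      apply Hpsi, (IH2 D HD), (Hsat (exist _ D HD) HR), (IH1 D HD), Hphi.
    + intros Himp [D HD] HR Hphi.
      apply (IH2 D HD), (HR _ _ Himp), (IH1 D HD), Hphi.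
Qed.
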